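(* Let $(0,0,y_e,0)$ be an equilibrium of the Steiner drop system, with $y_e=\tfrac13\sqrt{\tan\alpha_e}$, $\alpha_e\in(0,\pi/2)$, $q(\alpha_e)=q(\alpha_0)$. Then $f_x(0,y_e)<0$, so two eigenvalues of the Jacobian there are $\pm i\sqrt{-f_x(0,y_e)}$, nonzero and purely imaginary. Furthermore $h_y(0,y_e)<0$ if $\alpha_e<\alpha_0^*$, $h_y(0,y_e)=0$ if $\alpha_e=\alpha_0^*$, and $h_y(0,y_e)>0$ if $\alpha_e>\alpha_0^*$. Consequently, at the equilibrium $(0,0,\tfrac13\sqrt{\tan\alpha_0},0)$ all four eigenvalues are nonzero and purely imaginary when $\alpha_0<\alpha_0^*$, while when $\alpha_0>\alpha_0^*$ two eigenvalues are purely imaginary and two are real, nonzero, of opposite signs; for $\alpha_0\neq\alpha_0^*$ the two equilibria always have opposite types (the one with smaller angle $\alpha_e$ has all eigenvalues purely imaginary).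
   Context: Let $q(\alpha)=\dfrac{2\sin^2\alpha\,\sqrt{\tan\alpha}}{4+\sec\alpha}$ for $\alpha\in(0,\pi/2)$, and let $\alpha_0^*\approx1.391$ denote the unique point in $(0,\pi/2)$ at which $q$ attains its maximum ($q$ is strictly increasing before and strictly decreasing after $\alpha_0^*$). Fix $\alpha_0\in(0,\pi/2)$. For $x\in\mathbb{R}$, $y>0$ define $a(x,y)=\sqrt{\left(\tfrac{1}{3y}-3x\right)^2+9y^2}$, $b(x,y)=\sqrt{\left(\tfrac{1}{3y}+3x\right)^2+9y^2}$, $f(x,y)=\frac{1}{a}\left(\frac{1}{3y}-3x\right)-\frac{1}{b}\left(\frac{1}{3y}+3x\right)$, $h(x,y)=-3y\left(\frac1a+\frac1b\right)+\frac{q(\alpha_0)}{3y}\left(\frac{2(a+b)}{3y}+ab\right)$. The Steiner drop system is the ODE on $\{(x,w,y,z)\in\mathbb{R}^4: y>0\}$: $\dot x=w,\ \dot w=f(x,y),\ \dot y=z,\ \dot z=h(x,y)$. Its equilibria are the points $(0,0,y,0)$ with $y=\tfrac13\sqrt{\tan\alpha}$, $q(\alpha)=q(\alpha_0)$; at such a point the Jacobian eigenvalues are $\pm\sqrt{f_x(0,y)},\pm\sqrt{h_y(0,y)}$. Subscripts denote partial derivatives. *)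

From Stdlib Require Import Reals Lra.
Open Scope R_scope.

Definition q (al : R) : R :=
  2 * (sin al) ^ 2 * sqrt (tan al) / (4 + / cos al).

Definition aa (x y : R) : R := sqrt ((/ (3 * y) - 3 * x) ^ 2 + 9 * y ^ 2).
Definition bb (x y : R) : R := sqrt ((/ (3 * y) + 3 * x) ^ 2 + 9 * y ^ 2).

Definition ff (x y : R) : R :=
  / aa x y * (/ (3 * y) - 3 * x) - / bb x y * (/ (3 * y) + 3 * x).

Definition hh (al0 x y : R) : R :=
  - 3 * y * (/ aa x y + / bb x y)
  + q al0 / (3 * y) * (2 * (aa x y + bb x y) / (3 * y) + aa x y * bb x y).

Definition yeq (al : R) : R := / 3 * sqrt (tan al).

Definition is_fx (x y l : R) : Prop := derivable_pt_lim (fun t => ff t y) x l.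
Definition is_hy (al0 x y l : R) : Prop := derivable_pt_lim (fun t => hh al0 x t) y l.

(* complex numbers as pairs (re, im); csq = squaring *)
Definition csq (z : R * R) : R * R :=
  (fst z * fst z - snd z * snd z, 2 * fst z * snd z).

(* Jacobian eigenvalues at an equilibrium (0,0,y,0): by the context they are
   +-sqrt(f_x(0,y)), +-sqrt(h_y(0,y)), i.e. the complex lam with
   lam^2 = f_x(0,y) or lam^2 = h_y(0,y). *)
Definition jac_eig (al0 y : R) (lam : R * R) : Prop :=
  exists fx hy, is_fx 0 y fx /\ is_hy al0 0 y hy /\
    (csq lam = (fx, 0) \/ csq lam = (hy, 0)).

Definition eig_x (y : R) (lam : R * R) : Prop :=
  exists fx, is_fx 0 y fx /\ csq lam = (fx, 0).
Definition eig_y (al0 y : R) (lam : R * R) : Prop :=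
  exists hy, is_hy al0 0 y hy /\ csq lam = (hy, 0).

Definition pure_imag_nz (z : R * R) : Prop := fst z = 0 /\ snd z <> 0.
Definition real_nz (z : R * R) : Prop := snd z = 0 /\ fst z <> 0.

Definition all_pure_imag (al0 y : R) : Prop :=
  forall lam, jac_eig al0 y lam -> pure_imag_nz lam.

Definition saddle_center (al0 y : R) : Prop :=
  (forall lam, eig_x y lam -> pure_imag_nz lam) /\
  (forall lam, eig_y al0 y lam -> real_nz lam) /\
  (exists l1 l2, eig_y al0 y l1 /\ eig_y al0 y l2 /\
     snd l1 = 0 /\ snd l2 = 0 /\ 0 < fst l1 /\ fst l2 < 0).

From Stdlib Require Import Reals Lra.
From Coquelicot Require Import Coquelicot.
Open Scope R_scope.

(* At an equilibrium with angle a, put r = a(0,y) = b(0,y); then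
   cos a = 1/(3 y r), and both partial derivatives are explicit:
   f_x(0,y) = -54 y^2 / r^3 < 0, while h_y(0,y) is a negative multiple of
   N(cos a), where N(c) = 16c^3 + 6c^2 + 4c - 1.  The same polynomial governs
   q: q'(a) has the sign of N(cos a), so at the maximum point m of q we
   get N(cos m) = 0.  Since N increases on (0, oo) and cos decreases on
   (0, pi/2), h_y(0,y) has the sign of a - m.  Two distinct equilibria
   lie on the level set of the unimodal q, hence on either side of m. *)

Definition rad (y : R) : R := sqrt ((/ (3 * y)) ^ 2 + 9 * y ^ 2).

Definition crit_poly (c : R) : R := 16 * c ^ 3 + 6 * c ^ 2 + 4 * c - 1.

(* q(a) rewritten in terms of y = yeq a. *)
Definition q_height (y : R) : R :=
  2 / ((/ (3 * y)) ^ 2 * rad y ^ 2 * (4 * / (3 * y) + rad y)).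

Lemma rad_arg_pos y : 0 < y -> 0 < (/ (3 * y)) ^ 2 + 9 * y ^ 2.
Proof. intros Hy. assert (0 < y ^ 2) by (apply pow_lt; lra). nra. Qed.

Lemma rad_pos y : 0 < y -> 0 < rad y.
Proof. intros Hy. apply sqrt_lt_R0, rad_arg_pos, Hy. Qed.

Lemma rad_sqr y : 0 < y -> 9 * y ^ 2 * rad y ^ 2 = 1 + 81 * y ^ 4.
Proof.
intros Hy. unfold rad. rewrite pow2_sqrt by (left; apply rad_arg_pos, Hy).
field. lra.
Qed.

Ltac fold_rad y :=
  repeat match goal with |- context [sqrt ?A] =>
    replace (sqrt A) with (rad y) by (unfold rad; f_equal; field; lra) end.

Lemma sqrt_tan_facts a : 0 < a < PI / 2 ->
  0 < cos a /\ 0 < sin a /\ 0 < sqrt (tan a) /\ sqrt (tan a) ^ 2 = sin a / cos a.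
Proof.
intros Ha.
assert (Hc : 0 < cos a) by (apply cos_gt_0; lra).
assert (Hs : 0 < sin a) by (apply sin_gt_0; lra).
assert (Ht : 0 < tan a) by (apply Rdiv_lt_0_compat; lra).
repeat split; try lra.
- apply sqrt_lt_R0, Ht.
- rewrite pow2_sqrt; [reflexivity | lra].
Qed.

Lemma sin_cos_sqr a : sin a ^ 2 + cos a ^ 2 = 1.
Proof. rewrite <- !Rsqr_pow2. apply sin2_cos2. Qed.

Lemma yeq_pos a : 0 < a < PI / 2 -> 0 < yeq a.
Proof.
intros Ha. destruct (sqrt_tan_facts a Ha) as (_ & _ & Hp & _).
unfold yeq. lra.
Qed.

Lemma rad_yeq a : 0 < a < PI / 2 -> rad (yeq a) = / (cos a * sqrt (tan a)).
Proof.
intros Ha. destruct (sqrt_tan_facts a Ha) as (Hc & Hs & Hp & Hpp).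
unfold rad, yeq. rewrite <- (sqrt_pow2 (/ (cos a * sqrt (tan a)))).
2: { left. apply Rinv_0_lt_compat, Rmult_lt_0_compat; lra. }
f_equal. field_simplify_eq; try lra.
replace (sqrt (tan a) ^ 4) with ((sin a / cos a) ^ 2) by (rewrite <- Hpp; ring).
pose proof (sin_cos_sqr a). field_simplify; lra.
Qed.

Lemma cos_yeq a : 0 < a < PI / 2 -> cos a = / (3 * yeq a) / rad (yeq a).
Proof.
intros Ha. destruct (sqrt_tan_facts a Ha) as (Hc & Hs & Hp & Hpp).
rewrite rad_yeq by exact Ha. unfold yeq. field. lra.
Qed.

Lemma q_yeq a : 0 < a < PI / 2 -> q a = q_height (yeq a).
Proof.
intros Ha. destruct (sqrt_tan_facts a Ha) as (Hc & Hs & Hp & Hpp).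
unfold q_height. rewrite rad_yeq by exact Ha. unfold q, yeq.
field_simplify_eq; try (repeat split; nra).
replace (sqrt (tan a) ^ 5) with ((sin a / cos a) ^ 2 * sqrt (tan a))
  by (rewrite <- Hpp; ring).
field. lra.
Qed.

Lemma fx_equilibrium y : 0 < y -> is_fx 0 y (- 54 * y ^ 2 / rad y ^ 3).
Proof.
intros Hy. pose proof (rad_pos y Hy). pose proof (rad_sqr y Hy).
unfold is_fx. apply is_derive_Reals. unfold ff, aa, bb. auto_derive.
- fold_rad y. repeat split; nra.
- fold_rad y. field_simplify_eq; repeat split; nra.
Qed.

Lemma hy_equilibrium al0 y : 0 < y -> q al0 = q_height y ->
  is_hy al0 0 y (- 6 * crit_poly (/ (3 * y) / rad y) / (4 * / (3 * y) + rad y)).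
Proof.
intros Hy Hq. pose proof (rad_pos y Hy). pose proof (rad_sqr y Hy) as Hr2.
unfold is_hy. apply is_derive_Reals. unfold hh, aa, bb. rewrite Hq. unfold q_height.
auto_derive.
- fold_rad y. repeat split; nra.
- fold_rad y. unfold crit_poly. field_simplify_eq; try (repeat split; nra).
  assert (9 * y ^ 3 * rad y ^ 3 = (1 + 81 * y ^ 4) * (y * rad y))
    by (rewrite <- Hr2; ring).
  lra.
Qed.

Lemma q_derivative a : 0 < a < PI / 2 ->
  derivable_pt_lim q a
    (sin a * sqrt (tan a) * crit_poly (cos a) / (4 * cos a + 1) ^ 2).
Proof.
intros Ha. destruct (sqrt_tan_facts a Ha) as (Hc & Hs & Hp & Hpp).
pose proof (sin_cos_sqr a) as Hsc.
apply is_derive_Reals. unfold q, tan in *. auto_derive.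
- assert (0 < / cos a) by (apply Rinv_0_lt_compat; lra).
  repeat split; try apply Rgt_not_eq; nra.
- change (sin a * / cos a) with (sin a / cos a).
  unfold crit_poly. field_simplify_eq; try (repeat split; nra).
  rewrite Hpp. field_simplify_eq; [|lra].
  replace (sin a ^ 4) with ((1 - cos a ^ 2) ^ 2) by (rewrite <- Hsc; ring).
  replace (sin a ^ 2) with (1 - cos a ^ 2) by lra.
  ring.
Qed.

Lemma derivable_pt_lim_interior_max f a b c l :
  a < c < b -> (forall x, a < x < b -> f x <= f c) ->
  derivable_pt_lim f c l -> l = 0.
Proof.
intros Hc Hmax Hl.
pose (pr := exist (fun l => derivable_pt_abs f c l) l Hl : derivable_pt f c).
apply (deriv_maximum f a b c pr); lra || auto.
Qed.

Lemma unimodal_max f a b c :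
  (forall x y, a < x -> x < y -> y <= c -> f x < f y) ->
  (forall x y, c <= x -> x < y -> y < b -> f y < f x) ->
  forall x, a < x < b -> f x <= f c.
Proof.
intros Hinc Hdec x Hx.
destruct (Rtotal_order x c) as [Hlt | [-> | Hgt]].
- left. apply Hinc; lra.
- right. reflexivity.
- left. apply Hdec; lra.
Qed.

Lemma unimodal_level_split f a b c x1 x2 :
  (forall x y, a < x -> x < y -> y <= c -> f x < f y) ->
  (forall x y, c <= x -> x < y -> y < b -> f y < f x) ->
  a < x1 -> x1 < x2 -> x2 < b -> f x1 = f x2 -> x1 < c < x2.
Proof.
intros Hinc Hdec H1 H12 H2 Hf. split.
- destruct (Rlt_or_le x1 c) as [Hlt | Hle]; [exact Hlt|].
  specialize (Hdec x1 x2 Hle H12 H2). lra.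
- destruct (Rlt_or_le c x2) as [Hlt | Hle]; [exact Hlt|].
  specialize (Hinc x1 x2 H1 H12 Hle). lra.
Qed.

Lemma crit_poly_cos_argmax c :
  0 < c < PI / 2 -> (forall x, 0 < x < PI / 2 -> q x <= q c) ->
  crit_poly (cos c) = 0.
Proof.
intros Hc Hmax. destruct (sqrt_tan_facts c Hc) as (Hcos & Hs & Hp & _).
pose proof (derivable_pt_lim_interior_max q 0 (PI / 2) c _ Hc Hmax (q_derivative c Hc))
  as Hzero.
assert (0 < (4 * cos c + 1) ^ 2) by (apply pow_lt; lra).
assert (0 < sin c * sqrt (tan c)) by (apply Rmult_lt_0_compat; lra).
unfold Rdiv in Hzero.
destruct (Rmult_integral _ _ Hzero) as [Hprod | Hinv].
- destruct (Rmult_integral _ _ Hprod); [lra | assumption].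
- exfalso. apply (Rinv_neq_0_compat ((4 * cos c + 1) ^ 2)); lra.
Qed.

Lemma crit_poly_increasing c1 c2 : 0 < c1 -> c1 < c2 -> crit_poly c1 < crit_poly c2.
Proof.
intros H1 H12. unfold crit_poly.
assert (0 < (c2 - c1) * (c2 ^ 2 + c2 * c1 + c1 ^ 2)) by (apply Rmult_lt_0_compat; nra).
assert (0 < (c2 - c1) * (c2 + c1)) by (apply Rmult_lt_0_compat; nra).
nra.
Qed.

Lemma crit_poly_cos_sign c a :
  0 < c < PI / 2 -> crit_poly (cos c) = 0 -> 0 < a < PI / 2 ->
  (a < c -> 0 < crit_poly (cos a)) /\ (c < a -> crit_poly (cos a) < 0).
Proof.
intros Hc Hzero Ha.
assert (0 < cos c) by (apply cos_gt_0; lra).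
assert (0 < cos a) by (apply cos_gt_0; lra).
split; intros Hlt.
- rewrite <- Hzero. apply crit_poly_increasing; [lra|].
  apply cos_decreasing_1; lra.
- rewrite <- Hzero. apply crit_poly_increasing; [lra|].
  apply cos_decreasing_1; lra.
Qed.

Lemma csq_on_real_axis lam c : csq lam = (c, 0) ->
  fst lam * fst lam - snd lam * snd lam = c /\ (fst lam = 0 \/ snd lam = 0).
Proof.
destruct lam as [u v]. unfold csq; simpl. intros E. injection E as Hre Him.
split; [exact Hre|].
destruct (Req_dec u 0) as [Hu | Hu]; [left; exact Hu | right].
apply (Rmult_eq_reg_l (2 * u)); lra.
Qed.

Lemma csq_neg_pure_imag lam c : csq lam = (c, 0) -> c < 0 -> pure_imag_nz lam.
Proof.
intros E Hc. destruct (csq_on_real_axis lam c E) as [Hre [Hu | Hv]];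
  unfold pure_imag_nz; rewrite ?Hu, ?Hv in *.
- split; [reflexivity|]. intros Hv. rewrite Hv in Hre. lra.
- nra.
Qed.

Lemma csq_pos_real lam c : csq lam = (c, 0) -> 0 < c -> real_nz lam.
Proof.
intros E Hc. destruct (csq_on_real_axis lam c E) as [Hre [Hu | Hv]];
  unfold real_nz; rewrite ?Hu, ?Hv in *.
- nra.
- split; [reflexivity|]. intros Hu. rewrite Hu in Hre. lra.
Qed.

Lemma csq_real_sqrt c : 0 <= c ->
  csq (sqrt c, 0) = (c, 0) /\ csq (- sqrt c, 0) = (c, 0).
Proof.
intros Hc. pose proof (sqrt_sqrt c Hc).
unfold csq; simpl. split; f_equal; lra.
Qed.

Lemma equilibrium_fx_neg a : 0 < a < PI / 2 ->
  exists fx, is_fx 0 (yeq a) fx /\ fx < 0.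
Proof.
intros Ha. pose proof (yeq_pos a Ha) as Hy.
exists (- 54 * yeq a ^ 2 / rad (yeq a) ^ 3). split; [apply fx_equilibrium, Hy|].
assert (0 < yeq a ^ 2) by (apply pow_lt, Hy).
assert (0 < rad (yeq a) ^ 3) by (apply pow_lt, rad_pos, Hy).
apply Rdiv_neg_pos; lra.
Qed.

Lemma equilibrium_hy_sign al0 c a :
  0 < c < PI / 2 -> crit_poly (cos c) = 0 ->
  0 < a < PI / 2 -> q a = q al0 ->
  exists hy, is_hy al0 0 (yeq a) hy /\
    (a < c -> hy < 0) /\ (a = c -> hy = 0) /\ (c < a -> 0 < hy).
Proof.
intros Hc Hzero Ha Hq. pose proof (yeq_pos a Ha) as Hy.
destruct (crit_poly_cos_sign c a Hc Hzero Ha) as [Hbefore Hafter].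
exists (- 6 * crit_poly (/ (3 * yeq a) / rad (yeq a)) / (4 * / (3 * yeq a) + rad (yeq a))).
split.
{ apply hy_equilibrium; [exact Hy|]. rewrite <- q_yeq by exact Ha. symmetry; exact Hq. }
rewrite <- cos_yeq by exact Ha.
assert (0 < 4 * / (3 * yeq a) + rad (yeq a)).
{ pose proof (rad_pos _ Hy). assert (0 < / (3 * yeq a)) by (apply Rinv_0_lt_compat; lra).
  lra. }
repeat split; intros Hac.
- apply Rdiv_neg_pos; [specialize (Hbefore Hac); lra | assumption].
- subst a. rewrite Hzero. unfold Rdiv. ring.
- apply Rdiv_pos_pos; [specialize (Hafter Hac); lra | assumption].
Qed.

Lemma all_pure_imag_of_neg al0 y fx hy :
  is_fx 0 y fx -> is_hy al0 0 y hy -> fx < 0 -> hy < 0 -> all_pure_imag al0 y.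
Proof.
intros Hfx Hhy Hfn Hhn lam (fx' & hy' & Hfx' & Hhy' & [E | E]).
- rewrite (uniqueness_limite _ _ _ _ Hfx' Hfx) in E. exact (csq_neg_pure_imag _ _ E Hfn).
- rewrite (uniqueness_limite _ _ _ _ Hhy' Hhy) in E. exact (csq_neg_pure_imag _ _ E Hhn).
Qed.

Lemma saddle_center_of_signs al0 y fx hy :
  is_fx 0 y fx -> is_hy al0 0 y hy -> fx < 0 -> 0 < hy -> saddle_center al0 y.
Proof.
intros Hfx Hhy Hfn Hhp. split; [|split].
- intros lam (fx' & Hfx' & E).
  rewrite (uniqueness_limite _ _ _ _ Hfx' Hfx) in E. exact (csq_neg_pure_imag _ _ E Hfn).
- intros lam (hy' & Hhy' & E).
  rewrite (uniqueness_limite _ _ _ _ Hhy' Hhy) in E. exact (csq_pos_real _ _ E Hhp).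
- destruct (csq_real_sqrt hy (Rlt_le _ _ Hhp)) as [Eplus Eminus].
  assert (0 < sqrt hy) by (apply sqrt_lt_R0, Hhp).
  exists (sqrt hy, 0), (- sqrt hy, 0). simpl.
  repeat split; try lra; exists hy; split; assumption.
Qed.

Lemma equilibrium_types al0 c a :
  0 < c < PI / 2 -> crit_poly (cos c) = 0 ->
  0 < a < PI / 2 -> q a = q al0 ->
  (a < c -> all_pure_imag al0 (yeq a)) /\ (c < a -> saddle_center al0 (yeq a)).
Proof.
intros Hc Hzero Ha Hq.
destruct (equilibrium_fx_neg a Ha) as (fx & Hfx & Hfn).
destruct (equilibrium_hy_sign al0 c a Hc Hzero Ha Hq) as (hy & Hhy & Hneg & _ & Hpos).
split; intros Hac.
- exact (all_pure_imag_of_neg al0 _ fx hy Hfx Hhy Hfn (Hneg Hac)).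
- exact (saddle_center_of_signs al0 _ fx hy Hfx Hhy Hfn (Hpos Hac)).
Qed.

Theorem mainTheorem4 :
  forall al0 alst : R,
    0 < al0 < PI / 2 ->
    0 < alst < PI / 2 ->
    (* alst = alpha_0^*: q strictly increasing before and strictly decreasing after *)
    (forall a b, 0 < a -> a < b -> b <= alst -> q a < q b) ->
    (forall a b, alst <= a -> a < b -> b < PI / 2 -> q b < q a) ->
    (* statements at an arbitrary equilibrium (0,0,y_e,0) *)
    (forall ale : R,
       0 < ale < PI / 2 -> q ale = q al0 ->
       (exists fx, is_fx 0 (yeq ale) fx /\ fx < 0 /\
          (forall lam, csq lam = (fx, 0) -> pure_imag_nz lam)) /\
       (exists hy, is_hy al0 0 (yeq ale) hy /\
          (ale < alst -> hy < 0) /\ (ale = alst -> hy = 0) /\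
          (alst < ale -> 0 < hy))) /\
    (* consequences at the equilibrium (0,0,sqrt(tan al0)/3,0) *)
    (al0 < alst -> all_pure_imag al0 (yeq al0)) /\
    (alst < al0 -> saddle_center al0 (yeq al0)) /\
    (* the two equilibria have opposite types when al0 <> alst *)
    (al0 <> alst ->
       forall a1 a2 : R,
         0 < a1 -> a1 < a2 -> a2 < PI / 2 ->
         q a1 = q al0 -> q a2 = q al0 ->
         all_pure_imag al0 (yeq a1) /\ saddle_center al0 (yeq a2)).
Proof.
intros al0 alst H0 Hst Hinc Hdec.
pose proof (crit_poly_cos_argmax alst Hst (unimodal_max q 0 (PI / 2) alst Hinc Hdec))
  as Hzero.
pose proof (equilibrium_types al0 alst al0 Hst Hzero H0 eq_refl) as [Hsmall Hlarge].
split; [|split; [exact Hsmall | split; [exact Hlarge|]]].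
- intros ale Hale Hq. split.
  + destruct (equilibrium_fx_neg ale Hale) as (fx & Hfx & Hfn).
    exists fx. split; [exact Hfx | split; [exact Hfn |]].
    intros lam E. exact (csq_neg_pure_imag lam fx E Hfn).
  + exact (equilibrium_hy_sign al0 alst ale Hst Hzero Hale Hq).
- intros _ a1 a2 Ha1 H12 Ha2 Hq1 Hq2.
  assert (Hsplit : a1 < alst < a2).
  { apply (unimodal_level_split q 0 (PI / 2)); auto; congruence. }
  split.
  + apply (equilibrium_types al0 alst a1); auto; lra.
  + apply (equilibrium_types al0 alst a2); auto; lra.
Qed.
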